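(* Let $S^{(1)},\dots,S^{(n)}$ be arbitrary labeled samples, each of size $m$, $S^{(i)}=\{(x^{(i)}_j,y^{(i)}_j)\}_{j\in[m]}\subseteq\{\pm1\}^d\times\{\pm1\}$, let $\mathcal{H}$ be a class of functions $\{\pm1\}^d\to\{\pm1\}$, and let $t\in\mathbb{N}$. Let $h^{(1)},\dots,h^{(n)}$ be the output of $\textsc{Boost}(S^{(1)},\dots,S^{(n)},\mathcal{H},t)$. For each iteration $s\in[t]$, let $\Gamma_s\in[0,1]$ be the value satisfying $$\sum_{i\in[n]}W^{(i)}\Big(\sum_{j\in[m]}\frac{w^{(i)}_j}{W^{(i)}}\,y^{(i)}_j h^\star(x^{(i)}_j)\Big)^2=\Gamma_s\sum_{i\in[n]}W^{(i)},$$ where $w^{(i)}_j,W^{(i)},h^\star$ are the quantities of iteration $s$. Then $$\frac{1}{nm}\sum_{i\in[n]}\sum_{j\in[m]}\mathbf{1}\big[\mathrm{sign}(h^{(i)}(x^{(i)}_j))\neq y^{(i)}_j\big]\ \le\ \prod_{s\in[t]}\Big(1-\frac{\Gamma_s}{2}\Big).$$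
   Context: Algorithm $\textsc{Boost}(S^{(1)},\dots,S^{(n)},\mathcal{H},t)$: initialize real-valued functions $h^{(1)},\dots,h^{(n)}$ to the constant $0$. Repeat $t$ times: (1) for each $i\in[n],j\in[m]$ set $w^{(i)}_j=\exp(-y^{(i)}_j h^{(i)}(x^{(i)}_j))$ and $W^{(i)}=\sum_{j\in[m]}w^{(i)}_j$; (2) choose $h^\star\in\arg\max_{h\in\mathcal{H}}\sum_{i\in[n]}W^{(i)}\big(\sum_{j\in[m]}\frac{w^{(i)}_j}{W^{(i)}}y^{(i)}_jh(x^{(i)}_j)\big)^2$; (3) for each $i\in[n]$, update $h^{(i)}\leftarrow h^{(i)}+\alpha^{(i)}h^\star$ with $\alpha^{(i)}=\frac12\ln\Big(\frac{\sum_j w^{(i)}_j\mathbf{1}[y^{(i)}_j=h^\star(x^{(i)}_j)]}{\sum_j w^{(i)}_j\mathbf{1}[y^{(i)}_j\neq h^\star(x^{(i)}_j)]}\Big)$. Output $h^{(1)},\dots,h^{(n)}$ (used as classifiers via $\mathrm{sign}(h^{(i)})$). *)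

From HB Require Import structures.
From mathcomp Require Import all_boot all_order all_algebra.
From mathcomp Require Import reals sequences exp.
Set Implicit Arguments. Unset Strict Implicit. Unset Printing Implicit Defensive.
Import Order.TTheory GRing.Theory Num.Theory.
Local Open Scope ring_scope.

(* Encoding: {+1,-1} is encoded by bool (true = +1, false = -1).
   A point of {+-1}^d is a finite function 'I_d -> bool; a hypothesis
   {+-1}^d -> {+-1} is a finite function cube d -> bool. *)
Definition cube (d : nat) := {ffun 'I_d -> bool}.
Definition hyp (d : nat) := {ffun cube d -> bool}.

Definition pm1 {R : pzRingType} (b : bool) : R := if b then 1 else -1.

Section Boost.
Variables (R : realType) (d n m : nat).
Variables (x : 'I_n -> 'I_m -> cube d) (y : 'I_n -> 'I_m -> bool).

(* state of the algorithm: the real-valued functions h^(1..n) *)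
Definition bstate := 'I_n -> cube d -> R.

Definition bweight (F : bstate) (i : 'I_n) (j : 'I_m) : R :=
  expR (- (pm1 (y i j) * F i (x i j))).

Definition bW (F : bstate) (i : 'I_n) : R := \sum_(j < m) bweight F i j.

Definition bcorrect (F : bstate) (h : hyp d) (i : 'I_n) : R :=
  \sum_(j < m) bweight F i j * (y i j == h (x i j))%:R.
Definition bwrong (F : bstate) (h : hyp d) (i : 'I_n) : R :=
  \sum_(j < m) bweight F i j * (y i j != h (x i j))%:R.

Definition balpha (F : bstate) (h : hyp d) (i : 'I_n) : R :=
  ln (bcorrect F h i / bwrong F h i) / 2.

Definition bobjective (F : bstate) (h : hyp d) : R :=
  \sum_(i < n) bW F i *
    (\sum_(j < m) bweight F i j / bW F i * pm1 (y i j) * pm1 (h (x i j))) ^+ 2.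

Definition bstep (F : bstate) (h : hyp d) : bstate :=
  fun i z => F i z + balpha F h i * pm1 (h z).

Definition bzero : bstate := fun _ _ => 0.

Definition bstate_of (hs : seq (hyp d)) : bstate := foldl bstep bzero hs.

Definition hyp_default : hyp d := [ffun _ => true].

(* hs is a possible sequence of choices h^star of Boost(S,H,t): at each
   iteration s < t, the chosen hypothesis is in H and maximizes the objective
   (any tie-breaking is allowed). *)
Definition boost_run (H : {set hyp d}) (t : nat) (hs : seq (hyp d)) : Prop :=
  size hs = t /\
  forall s, (s < t)%N ->
    let F := bstate_of (take s hs) in
    let hstar := nth hyp_default hs s in
    hstar \in H /\ forall h, h \in H -> bobjective F h <= bobjective F hstar.

(* the step sizes alpha are well defined (finite) at every iteration *)
Definition boost_well_defined (t : nat) (hs : seq (hyp d)) : Prop :=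
  forall s, (s < t)%N -> forall i : 'I_n,
    let F := bstate_of (take s hs) in
    let hstar := nth hyp_default hs s in
    bcorrect F hstar i != 0 /\ bwrong F hstar i != 0.

End Boost.

(* The exponential loss expR (- y F(x)) dominates the 0-1 loss, so the training
   error is at most the potential sum_i W^(i), which starts at n m.  With
   c, w the correctly / wrongly classified weight of sample i, the step
   alpha = ln (c / w) / 2 turns W = c + w into 2 sqrt (c w), and
   2 sqrt (c w) <= W - W corr^2 / 2 where corr = (c - w) / W is the weighted
   correlation of h^star on sample i.  Summing over i, one iteration multiplies
   the potential by at most 1 - Gamma_s / 2. *)
From Pilot Require Import Defs.
From HB Require Import structures.
From mathcomp Require Import all_boot all_order all_algebra.
From mathcomp Require Import reals sequences exp.
From mathcomp Require Import ring lra.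
Set Implicit Arguments. Unset Strict Implicit. Unset Printing Implicit Defensive.
Import Order.TTheory GRing.Theory Num.Theory.
Local Open Scope ring_scope.

Lemma reweighted_mass_le (R : realFieldType) (c w e : R) :
  0 < c -> 0 < w -> 0 < e -> e * e = c / w ->
  c / e + w * e <= (c + w) - (c + w) * ((c - w) / (c + w)) ^+ 2 / 2.
Proof.
move=> c0 w0 e0 ee.
have -> : c = w * (e * e) by rewrite ee mulrCA divff ?mulr1 // gt_eqF.
have e2 : 0 < e * e + 1 by nra.
have W0 : 0 < w * (e * e) + w by nra.
have -> : (w * (e * e) + w) - (w * (e * e) + w) * ((w * (e * e) - w) / (w * (e * e) + w)) ^+ 2 / 2
   = w * (e * e) / e + w * e + w * (e - 1) ^+ 4 / (2 * (e * e + 1)).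
  by field; rewrite ?gt_eqF //; nra.
rewrite lerDl divr_ge0 //; last by lra.
by rewrite mulr_ge0 ?exprn_even_ge0 ?ltW.
Qed.

Lemma sg_mismatch_le_expR (R : realType) (f : R) (b : bool) :
  (Num.sg f != pm1 b :> R)%:R <= expR (- (pm1 b * f)).
Proof.
case: eqP => [_|]; first exact: expR_ge0.
case: b; rewrite /pm1 /= ?mul1r ?mulN1r ?opprK => hne.
- have [f_le0|f_gt0] := leP f 0; last by case: hne; rewrite gtr0_sg.
  by apply: le_trans (expR_ge1Dx _); lra.
- have [f_ge0|f_lt0] := leP 0 f; last by case: hne; rewrite ltr0_sg.
  by apply: le_trans (expR_ge1Dx _); lra.
Qed.

Section BoostPotential.
Variables (R : realType) (d n m : nat).
Variables (x : 'I_n -> 'I_m -> cube d) (y : 'I_n -> 'I_m -> bool).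
Implicit Types (F : bstate R d n) (h : hyp d) (i : 'I_n) (j : 'I_m).

Local Notation bweight := (bweight x y).
Local Notation bW := (bW x y).
Local Notation bcorrect := (bcorrect x y).
Local Notation bwrong := (bwrong x y).
Local Notation balpha := (balpha x y).
Local Notation bstep := (bstep x y).
Local Notation bstate_of := (bstate_of R x y).

Definition bpotential F : R := \sum_(i < n) bW F i.

Definition bcorrelation F h i : R :=
  \sum_(j < m) bweight F i j / bW F i * pm1 (y i j) * pm1 (h (x i j)).

Lemma bobjectiveE F h :
  bobjective x y F h = \sum_(i < n) bW F i * bcorrelation F h i ^+ 2.
Proof. by []. Qed.

Lemma bcorrect_ge0 F h i : 0 <= bcorrect F h i.
Proof. by apply: sumr_ge0 => j _; rewrite mulr_ge0 ?ler0n ?expR_ge0. Qed.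

Lemma bwrong_ge0 F h i : 0 <= bwrong F h i.
Proof. by apply: sumr_ge0 => j _; rewrite mulr_ge0 ?ler0n ?expR_ge0. Qed.

Lemma bW_split F h i : bW F i = bcorrect F h i + bwrong F h i.
Proof.
rewrite /bW /bcorrect /bwrong -big_split /=; apply: eq_bigr => j _.
by case: (y i j == h (x i j)) => /=; ring.
Qed.

Lemma bcorrelationE F h i :
  bcorrelation F h i = (bcorrect F h i - bwrong F h i) / bW F i.
Proof.
rewrite /bcorrelation /bcorrect /bwrong -sumrB mulr_suml; apply: eq_bigr => j _.
by case: (y i j); case: (h (x i j)); rewrite /pm1 /=; ring.
Qed.

Lemma bweight_bstep F h i j :
  bweight (bstep F h) i j = bweight F i j *
    (if y i j == h (x i j) then expR (- balpha F h i) else expR (balpha F h i)).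
Proof.
rewrite /Defs.bweight /Defs.bstep.
by case: (y i j); case: (h (x i j)); rewrite /pm1 /= -expRD; congr expR; ring.
Qed.

Lemma bW_bstep F h i :
  bW (bstep F h) i = bcorrect F h i / expR (balpha F h i)
                     + bwrong F h i * expR (balpha F h i).
Proof.
rewrite /Defs.bW /Defs.bcorrect /Defs.bwrong !mulr_suml -big_split /=.
apply: eq_bigr => j _; rewrite bweight_bstep expRN.
by case: (y i j == h (x i j)) => /=; ring.
Qed.

Lemma bW_bstep_le F h i : bcorrect F h i != 0 -> bwrong F h i != 0 ->
  bW (bstep F h) i <= bW F i - bW F i * bcorrelation F h i ^+ 2 / 2.
Proof.
move=> c_neq0 w_neq0.
have c0 : 0 < bcorrect F h i by rewrite lt_def c_neq0 bcorrect_ge0.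
have w0 : 0 < bwrong F h i by rewrite lt_def w_neq0 bwrong_ge0.
rewrite bW_bstep bcorrelationE (bW_split F h i).
apply: reweighted_mass_le; rewrite ?expR_gt0 //.
by rewrite -expRD /Defs.balpha -splitr lnK // posrE divr_gt0.
Qed.

Lemma bpotential_bstep_le F h :
  (forall i, bcorrect F h i != 0 /\ bwrong F h i != 0) ->
  bpotential (bstep F h) <= bpotential F - bobjective x y F h / 2.
Proof.
move=> hcw; rewrite bobjectiveE mulr_suml -sumrB; apply: ler_sum => i _.
by have [? ?] := hcw i; exact: bW_bstep_le.
Qed.

Lemma bpotential_bzero : bpotential (@bzero R d n) = (n * m)%:R.
Proof.
rewrite /bpotential /Defs.bW /Defs.bweight /bzero.
under eq_bigr => i _ do under eq_bigr => j _ do rewrite mulr0 oppr0 expR0.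
by rewrite !sumr_const !card_ord -mulrnA mulnC.
Qed.

Lemma bpotential_take_le (hs : seq (hyp d)) (Gamma : nat -> R) :
  (forall s, (s < size hs)%N -> forall i : 'I_n,
     let F := bstate_of (take s hs) in let h := nth (hyp_default d) hs s in
     bcorrect F h i != 0 /\ bwrong F h i != 0) ->
  (forall s, (s < size hs)%N -> Gamma s <= 2) ->
  (forall s, (s < size hs)%N ->
     bobjective x y (bstate_of (take s hs)) (nth (hyp_default d) hs s)
     = Gamma s * bpotential (bstate_of (take s hs))) ->
  forall s, (s <= size hs)%N ->
  bpotential (bstate_of (take s hs)) <= (n * m)%:R * \prod_(k < s) (1 - Gamma k / 2).
Proof.
move=> hwd hG hobj; elim=> [|s IH] s_le.
  by rewrite take0 big_ord0 mulr1 bpotential_bzero.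
rewrite (take_nth (hyp_default d)) // /Defs.bstate_of foldl_rcons -/(bstate_of _).
apply: le_trans (bpotential_bstep_le (hwd s s_le)) _.
rewrite hobj // big_ord_recr /= mulrA.
have step_ge0 : 0 <= 1 - Gamma s / 2 by have := hG s s_le; lra.
have := IH (ltnW s_le).
set T := bpotential _; set P := _ * \prod_(k < s) _ => T_le.
have -> : T - Gamma s * T / 2 = T * (1 - Gamma s / 2) by ring.
exact: ler_wpM2r.
Qed.

Lemma training_error_le_bpotential F :
  \sum_(i < n) \sum_(j < m) (Num.sg (F i (x i j)) != pm1 (y i j) :> R)%:R
  <= bpotential F.
Proof.
apply: ler_sum => i _; apply: ler_sum => j _; exact: sg_mismatch_le_expR.
Qed.

End BoostPotential.

Theorem mainTheorem3 (R : realType) (d n m : nat)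
  (x : 'I_n -> 'I_m -> cube d) (y : 'I_n -> 'I_m -> bool)
  (H : {set hyp d}) (t : nat) (hs : seq (hyp d)) (Gamma : nat -> R) :
  boost_run R x y H t hs ->
  boost_well_defined R x y t hs ->
  (forall s, (s < t)%N -> 0 <= Gamma s <= 1) ->
  (forall s, (s < t)%N ->
     bobjective x y (bstate_of R x y (take s hs)) (nth (hyp_default d) hs s)
     = Gamma s * \sum_(i < n) bW x y (bstate_of R x y (take s hs)) i) ->
  ((n * m)%:R)^-1 *
    \sum_(i < n) \sum_(j < m)
      (Num.sg (bstate_of R x y hs i (x i j)) != pm1 (y i j) :> R)%:R
  <= \prod_(s < t) (1 - Gamma s / 2).
Proof.
move=> [size_hs _] hwd hG hobj; subst t.
have G2 s : (s < size hs)%N -> Gamma s <= 2.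
  by move=> /hG /andP[_ G1]; lra.
have := bpotential_take_le hwd G2 hobj (leqnn (size hs)).
rewrite take_size => pot_le.
have [nm0|nm0] := eqVneq ((n * m)%:R : R) 0.
  rewrite nm0 invr0 mul0r; apply: prodr_ge0 => s _.
  by have := G2 s (ltn_ord s); lra.
rewrite ler_pdivrMl ?lt_def ?nm0 ?ler0n //.
exact: le_trans (training_error_le_bpotential x y _) pot_le.
Qed.
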